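(* Let $p,q\in\mathcal{S}$, let $k^*=\arg\max_k q_k$, let $m\ge1$ and $\delta\in[0,\log(1/p_{k^*}))$. Consider the problem of minimizing $H(\Phi\|q^m)$ over probability distributions $\Phi$ on $[K]^m$ subject to $D_{\mathrm{KL}}(\Phi\|p^m)\le m\delta$. Its unique solution is the product distribution $\phi_\delta^m$, i.e. $\Phi(y^m)=\prod_{i=1}^m\phi_\delta(y_i)$, where $\phi_\delta=T(q,p,\alpha(\delta))$.
   Context: Fix $K\ge2$ and $\zeta\in(0,1/K)$. $\mathcal{S}$ is the set of probability vectors $p=(p_1,\dots,p_K)$ on $[K]=\{1,\dots,K\}$ with $p_k>\zeta$ for all $k$ and $p_k\neq p_{k'}$ for all $k\ne k'$. For $p\in\mathcal{S}$, $p^m$ denotes the product (memoryless) distribution $p^m(y^m)=\prod_{i=1}^m p_{y_i}$ on $[K]^m$. Cross entropy $H(a\|b)=\sum a\log(1/b)$, KL divergence $D_{\mathrm{KL}}(a\|b)=\sum a\log(a/b)$, natural logarithms. Mismatched tilt: for $\alpha\in\mathbb{R}$, $T(q,p,\alpha)_k=\frac{p_kq_k^\alpha}{\sum_{j}p_jq_j^\alpha}$. For $\delta\in[0,\log(1/p_{k^*}))$, $\alpha(\delta)$ denotes the unique $\alpha\ge0$ with $D_{\mathrm{KL}}(T(q,p,\alpha)\|p)=\delta$, and $\phi_\delta=T(q,p,\alpha(\delta))$. *)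

From HB Require Import structures.
From mathcomp Require Import all_boot all_order all_algebra.
From mathcomp Require Import all_classical all_reals.
From mathcomp Require Import exp.
Set Implicit Arguments. Unset Strict Implicit. Unset Printing Implicit Defensive.
Import Order.TTheory GRing.Theory Num.Theory.
Local Open Scope ring_scope.

Section Defs.
Variable R : realType.

Definition is_prob (A : finType) (a : A -> R) : Prop :=
  (forall x, 0 <= a x) /\ \sum_(x : A) a x = 1.

Definition inS (K : nat) (zeta : R) (p : 'I_K -> R) : Prop :=
  is_prob p /\ (forall k, zeta < p k) /\ (forall k k' : 'I_K, k != k' -> p k != p k').

Definition crossent (A : finType) (a b : A -> R) : R :=
  \sum_(x : A) a x * ln (1 / b x).

Definition KL (A : finType) (a b : A -> R) : R :=
  \sum_(x : A) a x * ln (a x / b x).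

Definition tilt (K : nat) (q p : 'I_K -> R) (alpha : R) : 'I_K -> R :=
  fun k => p k * q k `^ alpha / \sum_(j < K) p j * q j `^ alpha.

Definition prodist (K : nat) (m : nat) (p : 'I_K -> R) : {ffun 'I_m -> 'I_K} -> R :=
  fun y => \prod_(i < m) p (y i).

Definition unique_minimizer (A : Type) (feasible : A -> Prop) (f : A -> R) (x : A)
  (eqv : A -> A -> Prop) : Prop :=
  feasible x /\ forall y, feasible y -> eqv y x \/ f x < f y.

End Defs.
Arguments prodist {R K} m p y.

From HB Require Import structures.
From mathcomp Require Import all_boot all_order all_algebra.
From mathcomp Require Import all_classical all_reals.
From mathcomp Require Import exp.
From mathcomp Require Import topology normedtype sequences.
From mathcomp Require Import ring lra.
Import Order.TTheory GRing.Theory Num.Theory.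
Local Open Scope ring_scope.
Import numFieldNormedType.Exports.

(* The problem is solved by Lagrangian duality.  For [a >= 0] the product [Psi] of
   [m] copies of the tilt [phi_a = T(q, p, a)] satisfies
   [ln Psi = ln p^m + a ln q^m - c], so [KL Phi Psi = KL Phi p^m + a H(Phi||q^m) + c]
   for every distribution [Phi].  As [KL Psi p^m = m KL(phi_a||p)], a feasible [Phi]
   whose cross entropy does not exceed that of [Psi] has [KL Phi Psi <= 0], hence
   [Phi = Psi] by Gibbs' inequality.
   The multiplier comes from the intermediate value theorem: [a |-> KL(phi_a||p)] is
   continuous, vanishes at [0], is strictly increasing on [[0, +oo)] (its increments
   are controlled by KL divergences between tilts), and approaches [-ln p_k*] because
   [phi_a] concentrates on [k*] as [a] grows. *)

Section Entropy.
Context {R : realType}.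

Lemma lt_1BVx_ln {x : R} : 0 < x -> x != 1 -> 1 - x^-1 < ln x.
Proof.
move=> x0 x1; have : - ln x != 0 by rewrite oppr_eq0 ln_eq0.
by move=> /expR_gt1Dx; rewrite expRN lnK ?posrE //; lra.
Qed.

Lemma mul_ln_div_gt {a b : R} : 0 <= a -> 0 < b -> a != b -> a - b < a * ln (a / b).
Proof.
rewrite le_eqVlt => /predU1P[<- b0 _|a0 b0 ab]; first by rewrite mul0r sub0r oppr_lt0.
have ab1 : a / b != 1 by apply: contra ab => /eqP/divr1_eq ->.
have := lt_1BVx_ln (divr_gt0 a0 b0) ab1; rewrite -(ltr_pM2l a0) invf_div.
by rewrite mulrBr mulr1 mulrCA divff ?gt_eqF // mulr1.
Qed.

Lemma mul_ln_div_ge {a b : R} : 0 <= a -> 0 < b -> a - b <= a * ln (a / b).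
Proof.
move=> a0 b0; have [->|ab] := eqVneq a b.
  by rewrite divff ?gt_eqF // ln1 mulr0 subrr.
exact/ltW/mul_ln_div_gt.
Qed.

Lemma mul_ln_div {a b : R} : 0 <= a -> 0 < b -> a * ln (a / b) = a * ln a - a * ln b.
Proof.
rewrite le_eqVlt => /predU1P[<- _|a0 b0]; first by rewrite !mul0r subrr.
by rewrite ln_div ?posrE // mulrBr.
Qed.

Lemma xlnx_ge_sqrt {x : R} : 0 <= x -> - 2 * Num.sqrt x <= x * ln x.
Proof.
rewrite le_eqVlt => /predU1P[<-|x0]; first by rewrite sqrtr0 mulr0 mul0r.
set y := Num.sqrt x; have y0 : 0 < y by rewrite sqrtr_gt0.
have -> : x = y ^+ 2 by rewrite sqr_sqrtr ?ltW.
have := mul_ln_div_ge (ltW y0) ltr01; rewrite divr1 lnXn // => ylny.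
by rewrite -mulr_natr; nra.
Qed.

Context {A : finType}.
Implicit Types Phi Psi P Q : A -> R.

Lemma KL_excessE Phi Psi : \sum_x Phi x = \sum_x Psi x ->
  KL Phi Psi = \sum_x (Phi x * ln (Phi x / Psi x) - (Phi x - Psi x)).
Proof. by move=> e; rewrite sumrB sumrB e subrr subr0. Qed.

Lemma KL_ge0 {Phi Psi} : is_prob Phi -> is_prob Psi -> (forall x, 0 < Psi x) ->
  0 <= KL Phi Psi.
Proof.
move=> [Phi0 Phi1] [_ Psi1] Psi0; rewrite KL_excessE ?Phi1 ?Psi1 //.
by apply: sumr_ge0 => x _; rewrite subr_ge0 mul_ln_div_ge.
Qed.

Lemma KL_eq0 {Phi Psi} : is_prob Phi -> is_prob Psi -> (forall x, 0 < Psi x) ->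
  KL Phi Psi = 0 -> Phi =1 Psi.
Proof.
move=> [Phi0 Phi1] [_ Psi1] Psi0; rewrite KL_excessE ?Phi1 ?Psi1 //.
move=> /psumr_eq0P eq0 x; apply/eqP; apply: contraT => neq.
have := mul_ln_div_gt (Phi0 x) (Psi0 x) neq.
by rewrite -subr_gt0 eq0 ?ltxx // => y _; rewrite subr_ge0 mul_ln_div_ge.
Qed.

Lemma KL_self Phi : KL Phi Phi = 0.
Proof.
rewrite /KL big1 // => x _; have [->|x0] := eqVneq (Phi x) 0; first by rewrite mul0r.
by rewrite divff // ln1 mulr0.
Qed.

Lemma KL_shift {Phi P Psi} (g : A -> R) c : is_prob Phi ->
  (forall x, 0 < P x) -> (forall x, 0 < Psi x) ->
  (forall x, ln (Psi x) = ln (P x) + g x - c) ->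
  KL Phi Psi = KL Phi P - \sum_x Phi x * g x + c.
Proof.
move=> [Phi0 Phi1] P0 Psi0 lnPsi.
rewrite -[c]mul1r -Phi1 mulr_suml /KL -sumrB -big_split; apply: eq_bigr => x _ /=.
have [->|x0] := eqVneq (Phi x) 0; first by rewrite !mul0r subrr addr0.
have Phix : 0 < Phi x by rewrite lt_def x0 Phi0.
by rewrite !ln_div ?posrE // lnPsi; ring.
Qed.

Lemma crossentE Phi Q : (forall x, 0 < Q x) ->
  crossent Phi Q = - \sum_x Phi x * ln (Q x).
Proof.
move=> Q0; rewrite /crossent -sumrN; apply: eq_bigr => x _.
by rewrite div1r lnV ?posrE // mulrN.
Qed.

Lemma tilted_unique_minimizer {P Q Psi} {a c : R} :
  (forall x, 0 < P x) -> (forall x, 0 < Q x) ->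
  is_prob Psi -> (forall x, 0 < Psi x) -> 0 <= a ->
  (forall x, ln (Psi x) = ln (P x) + a * ln (Q x) - c) ->
  unique_minimizer (fun Phi => is_prob Phi /\ KL Phi P <= KL Psi P)
    (fun Phi => crossent Phi Q) Psi (fun Phi Psi => forall x, Phi x = Psi x).
Proof.
move=> P0 Q0 Psip Psi0 a0 lnPsi.
have lagrangian Phi : is_prob Phi -> KL Phi Psi = KL Phi P + a * crossent Phi Q + c.
  move=> Phip; rewrite (KL_shift (fun x => a * ln (Q x)) c Phip P0 Psi0 lnPsi).
  rewrite crossentE // mulrN mulr_sumr.
  by congr (_ - _ + _); apply: eq_bigr => x _; rewrite mulrCA.
split=> // Phi [Phip PhiP].
have [lt|ge] := ltP (crossent Psi Q) (crossent Phi Q); [by right | left].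
apply: KL_eq0 => //; apply/eqP; rewrite eq_le KL_ge0 // andbT lagrangian //.
have := lagrangian Psi Psip; rewrite KL_self.
have : a * crossent Phi Q <= a * crossent Psi Q by rewrite ler_wpM2l.
lra.
Qed.

Lemma ln_prod (I : finType) (f : I -> R) : (forall i, 0 < f i) ->
  ln (\prod_i f i) = \sum_i ln (f i).
Proof.
move=> f0; suff [] : 0 < \prod_i f i /\ ln (\prod_i f i) = \sum_i ln (f i) by [].
apply: (big_rec2 (fun s p => 0 < p /\ ln p = s)); first by rewrite ln1.
by move=> i s p _ [p0 <-]; rewrite mulr_gt0 // lnM ?posrE.
Qed.

Lemma prob_le1 {Phi x} : is_prob Phi -> Phi x <= 1.
Proof.
move=> [Phi0 <-]; rewrite (bigD1 x) //= lerDl.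
by apply: sumr_ge0.
Qed.

Lemma KL_ge_concentrated {phi p : A -> R} {x0 : A} {eta : R} :
  is_prob phi -> is_prob p -> (forall x, 0 < p x) -> 0 <= eta <= 1 ->
  (forall x, x != x0 -> phi x <= eta ^+ 2) ->
  - ln (p x0) - #|A|%:R * eta * (3 - ln (p x0)) <= KL phi p.
Proof.
move=> [phi0 phi1] pp p0 /andP[eta0 eta1] small.
have L0 : 0 <= - ln (p x0) by rewrite oppr_ge0 ln_le0 // prob_le1.
have small' x : x != x0 -> phi x <= eta.
  by move/small/le_trans; apply; rewrite expr2 ler_piMr.
set s := \sum_(x | x != x0) phi x.
have phix0 : phi x0 = 1 - s by rewrite -phi1 (bigD1 x0) //= addrK.
have s_le : s <= #|A|%:R * eta.
  rewrite /s big_mkcond -sum1_card natr_sum mulr_suml /=.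
  by apply: ler_sum => x _; case: ifP => [/small'|_]; rewrite ?mul1r.
have tail : - (2 * (#|A|%:R * eta)) <= \sum_(x | x != x0) phi x * ln (phi x / p x).
  rewrite big_mkcond -sum1_card natr_sum mulr_suml mulr_sumr -sumrN /=.
  apply: ler_sum => x _; case: ifPn => [x_x0|_]; last first.
    by rewrite mul1r oppr_le0 mulr_ge0.
  have sq : Num.sqrt (phi x) <= eta.
    by rewrite -(ger0_norm eta0) -sqrtr_sqr ler_sqrt ?small // sqr_ge0.
  have lnp : phi x * ln (p x) <= 0.
    by rewrite mulr_ge0_le0 // ln_le0 // prob_le1.
  have := xlnx_ge_sqrt (phi0 x); rewrite mul1r mul_ln_div //; lra.
have head : - s + (1 - s) * - ln (p x0) <= phi x0 * ln (phi x0 / p x0).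
  have := mul_ln_div_ge (phi0 x0) ltr01; rewrite divr1 mul_ln_div // phix0; lra.
have sL : s * (1 - ln (p x0)) <= #|A|%:R * eta * (1 - ln (p x0)).
  by rewrite ler_wpM2r //; lra.
rewrite /KL (bigD1 x0) //=; lra.
Qed.

End Entropy.

Section ProductDistribution.
Context {R : realType} {K m : nat}.
Implicit Types (phi p : 'I_K -> R) (y : {ffun 'I_m -> 'I_K}).

Lemma prodist_gt0 phi : (forall k, 0 < phi k) -> forall y, 0 < prodist m phi y.
Proof. by move=> phi0 y; apply: prodr_gt0. Qed.

Lemma prodist_prob phi : is_prob phi -> is_prob (prodist m phi).
Proof.
move=> [phi0 phi1]; split=> [y|]; first exact: prodr_ge0.
by rewrite /prodist -(bigA_distr_bigA (fun _ k => phi k)) big1.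
Qed.

Lemma ln_prodist phi y : (forall k, 0 < phi k) ->
  ln (prodist m phi y) = \sum_i ln (phi (y i)).
Proof. by move=> phi0; rewrite ln_prod. Qed.

Lemma prodist_expect_sum phi (h : 'I_K -> R) : \sum_k phi k = 1 ->
  \sum_y prodist m phi y * \sum_i h (y i) = m%:R * \sum_k phi k * h k.
Proof.
move=> phi1; under eq_bigr do rewrite mulr_sumr.
rewrite exchange_big /= -[m in m%:R]card_ord mulr_natl -sumr_const.
apply: eq_bigr => i _.
pose F j k := if j == i then phi k * h k else phi k.
have prodF y : prodist m phi y * h (y i) = \prod_j F j (y j).
  rewrite /prodist (bigD1 i) //= [RHS](bigD1 i) //= /F eqxx mulrAC.
  by congr (_ * _); apply: eq_bigr => j /negbTE ->.
under eq_bigr do rewrite prodF.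
rewrite -(bigA_distr_bigA F) (bigD1 i) //= [X in _ * X]big1 ?mulr1.
  by apply: eq_bigr => k _; rewrite /F eqxx.
by move=> j /negbTE ji; rewrite -phi1; apply: eq_bigr => k _; rewrite /F ji.
Qed.

Lemma KL_prodist phi p : is_prob phi -> (forall k, 0 < phi k) -> (forall k, 0 < p k) ->
  KL (prodist m phi) (prodist m p) = m%:R * KL phi p.
Proof.
move=> [_ phi1] phi0 p0; rewrite -prodist_expect_sum //; apply: eq_bigr => y _.
rewrite ln_div ?posrE ?prodist_gt0 // !ln_prodist // -sumrB.
by congr (_ * _); apply: eq_bigr => i _; rewrite ln_div ?posrE.
Qed.

End ProductDistribution.

Lemma powR_expR {R : realType} (x g : R) : 0 < x -> x `^ g = expR (g * ln x).
Proof. by move=> x0; rewrite /powR gt_eqF. Qed.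

Lemma continuous_powR {R : realType} {x : R} : 0 < x -> continuous (fun g : R => x `^ g).
Proof.
move=> x0 g; rewrite (_ : (fun g => x `^ g) = (fun g => expR (g * ln x))).
  apply: continuous_comp; last exact: continuous_expR.
  by apply: continuousM; [exact: cvg_id | exact: cvg_cst].
by apply/funext => h; rewrite powR_expR.
Qed.

Section Tilt.
Context {R : realType} {K : nat} {p q : 'I_K -> R}.
Hypotheses (pprob : is_prob p) (p0 : forall k, 0 < p k) (q0 : forall k, 0 < q k).

Definition tiltZ (g : R) := \sum_k p k * q k `^ g.

Definition tilt_mean (g : R) := \sum_k tilt q p g k * ln (q k).

Lemma tiltZ_gt0 g : 0 < tiltZ g.
Proof.
have [k _] : exists k : 'I_K, true.
  case: (pickP 'I_K) => [k|none]; first by exists k.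
  by case: pprob => _; rewrite big_pred0 // => /eqP; rewrite eq_sym oner_eq0.
rewrite /tiltZ (bigD1 k) //= ltr_pwDl ?mulr_gt0 ?powR_gt0 //.
by apply: sumr_ge0 => j _; rewrite mulr_ge0 ?powR_ge0 ?ltW.
Qed.

Lemma tilt_gt0 g k : 0 < tilt q p g k.
Proof. by rewrite divr_gt0 ?mulr_gt0 ?powR_gt0 ?tiltZ_gt0. Qed.

Lemma tilt_prob g : is_prob (tilt q p g).
Proof.
split=> [k|]; first exact/ltW/tilt_gt0.
by rewrite /tilt -mulr_suml divff // gt_eqF // tiltZ_gt0.
Qed.

Lemma ln_tilt g k : ln (tilt q p g k) = ln (p k) + g * ln (q k) - ln (tiltZ g).
Proof.
rewrite ln_div ?posrE ?mulr_gt0 ?powR_gt0 ?tiltZ_gt0 //.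
by rewrite lnM ?posrE ?powR_gt0 // ln_powR.
Qed.

Lemma KL_tilt {phi} g : is_prob phi ->
  KL phi (tilt q p g) = KL phi p - g * \sum_k phi k * ln (q k) + ln (tiltZ g).
Proof.
move=> phip.
rewrite (KL_shift (fun k => g * ln (q k)) (ln (tiltZ g)) phip p0 (tilt_gt0 g)).
  by rewrite mulr_sumr; congr (_ - _ + _); apply: eq_bigr => k _; rewrite mulrCA.
exact: ln_tilt.
Qed.

Lemma KL_tiltE g : KL (tilt q p g) p = g * tilt_mean g - ln (tiltZ g).
Proof. by have := KL_tilt g (tilt_prob g); rewrite KL_self /tilt_mean; lra. Qed.

Lemma KL_tilt0 : KL (tilt q p 0) p = 0.
Proof.
rewrite KL_tiltE mul0r sub0r (_ : tiltZ 0 = 1) ?ln1 ?oppr0 //.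
by rewrite -(proj2 pprob); apply: eq_bigr => k _; rewrite powRr0 mulr1.
Qed.

Lemma ln_prodist_tilt m g (y : {ffun 'I_m -> 'I_K}) :
  ln (prodist m (tilt q p g) y) =
  ln (prodist m p y) + g * ln (prodist m q y) - m%:R * ln (tiltZ g).
Proof.
rewrite !ln_prodist //; last exact: tilt_gt0.
under eq_bigr do rewrite ln_tilt.
by rewrite sumrB big_split /= -mulr_sumr sumr_const card_ord mulr_natl.
Qed.

Section Monotone.
Variables k1 k2 : 'I_K.
Hypothesis q12 : q k1 != q k2.

Lemma tilt_inj a b : tilt q p a =1 tilt q p b -> a = b.
Proof.
move=> ab; have lnq12 : ln (q k1) - ln (q k2) != 0.
  by rewrite subr_eq0; apply: contra q12 => /eqP/ln_inj -> //; rewrite posrE.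
have := congr1 (@ln R) (ab k1); have := congr1 (@ln R) (ab k2).
rewrite !ln_tilt => e2 e1.
have : (a - b) * (ln (q k1) - ln (q k2)) = 0 by lra.
by move/eqP; rewrite mulf_eq0 (negbTE lnq12) orbF subr_eq0 => /eqP.
Qed.

Lemma KL_tilt_tilt_gt0 {a b} : a != b -> 0 < KL (tilt q p a) (tilt q p b).
Proof.
move=> ab; have [pa pb] := (tilt_prob a, tilt_prob b).
rewrite lt_def KL_ge0 ?andbT //; last exact: tilt_gt0.
apply: contra ab => /eqP /(KL_eq0 pa pb (tilt_gt0 b)).
by move/tilt_inj ->.
Qed.

(* With [f g := KL (tilt q p g) p] and [mu := tilt_mean]:
   [f b - f a = KL(phi_b||phi_a) + a (mu b - mu a)] and
   [(b - a) (mu b - mu a) = KL(phi_a||phi_b) + KL(phi_b||phi_a)]. *)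
Lemma KL_tilt_lt {a b} : 0 <= a -> a < b -> KL (tilt q p a) p < KL (tilt q p b) p.
Proof.
move=> a0 ab; rewrite !KL_tiltE; have [pa pb] := (tilt_prob a, tilt_prob b).
have := KL_tilt_tilt_gt0 (negbT (lt_eqF ab)).
rewrite (KL_tilt b pa) KL_tiltE -/(tilt_mean a) => Dab.
have := KL_tilt_tilt_gt0 (negbT (gt_eqF ab)).
rewrite (KL_tilt a pb) KL_tiltE -/(tilt_mean b) => Dba.
have mean_lt : tilt_mean a < tilt_mean b.
  have : 0 < (b - a) * (tilt_mean b - tilt_mean a) by nra.
  by rewrite pmulr_rgt0 ?subr_gt0.
have : 0 <= a * (tilt_mean b - tilt_mean a) by rewrite mulr_ge0 // subr_ge0 ltW.
lra.
Qed.

Lemma KL_tilt_inj {a b} : 0 <= a -> 0 <= b ->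
  KL (tilt q p a) p = KL (tilt q p b) p -> a = b.
Proof.
move=> a0 b0 e; case: (ltgtP a b) => // [ab|ba].
  by have := KL_tilt_lt a0 ab; rewrite e ltxx.
by have := KL_tilt_lt b0 ba; rewrite e ltxx.
Qed.

End Monotone.

Lemma continuous_tiltZ : continuous tiltZ.
Proof.
apply: continuous_big; first exact: add_continuous.
by move=> k _ g; apply: continuousM; [exact: cvg_cst | exact: continuous_powR].
Qed.

Lemma continuous_tilt_mean : continuous tilt_mean.
Proof.
apply: continuous_big; first exact: add_continuous.
move=> k _ g.
have pq : {for g, continuous (fun g => p k * q k `^ g)}.
  exact: continuousM (cvg_cst _) (continuous_powR (q0 k) g).
have Zinv : {for g, continuous (fun g => (tiltZ g)^-1)}.
  by apply: continuousV; [rewrite gt_eqF ?tiltZ_gt0 | exact: continuous_tiltZ].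
exact: continuousM (continuousM pq Zinv) (cvg_cst _).
Qed.

Lemma continuous_KL_tilt : continuous (fun g => KL (tilt q p g) p).
Proof.
rewrite (_ : (fun g => _) = (fun g => g * tilt_mean g - ln (tiltZ g))); last first.
  by apply/funext => g; rewrite KL_tiltE.
move=> g.
have gmean : {for g, continuous (fun h : R => h * tilt_mean h)}.
  exact: continuousM cvg_id (continuous_tilt_mean g).
have lnZ : {for g, continuous (fun h => ln (tiltZ h))}.
  exact: continuous_comp (continuous_tiltZ g) (continuous_ln (tiltZ_gt0 g)).
exact: continuousB gmean lnZ.
Qed.

Section Concentration.
Variable kstar : 'I_K.
Hypothesis q_lt : forall k, k != kstar -> q k < q kstar.

Lemma tilt_le_expR g k :
  tilt q p g k <= expR (g * (ln (q k) - ln (q kstar))) / p kstar.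
Proof.
have Z_ge : p kstar * q kstar `^ g <= tiltZ g.
  rewrite /tiltZ (bigD1 kstar) //= lerDl.
  by apply: sumr_ge0 => j _; rewrite mulr_ge0 ?powR_ge0 ?ltW.
rewrite -ler_ln ?posrE ?mulr_gt0 ?powR_gt0 ?tiltZ_gt0 // lnM ?posrE ?powR_gt0 // in Z_ge.
have lnp : ln (p k) <= 0 by rewrite ln_le0 // prob_le1.
rewrite -[tilt _ _ _ _]lnK ?posrE ?tilt_gt0 // -[p kstar]lnK ?posrE // -expRB.
by rewrite ler_expR ln_tilt ln_powR in Z_ge *; lra.
Qed.

Lemma tilt_concentrates {eps} : 0 < eps ->
  exists2 b, 0 <= b & forall k, k != kstar -> tilt q p b k <= eps.
Proof.
(* The quotient at [k = kstar] is the junk value [x / 0 = 0]; it is never used. *)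
move=> eps0; pose c k := ln (eps * p kstar) / (ln (q k) - ln (q kstar)).
exists (\big[Num.max/0]_k c k); first exact: bigmax_ge_id.
move=> k kk; apply: le_trans (tilt_le_expR _ k) _.
have d0 : ln (q k) - ln (q kstar) < 0 by rewrite subr_lt0 ltr_ln ?posrE ?q_lt.
rewrite ler_pdivrMr // -[eps * p kstar]lnK ?posrE ?mulr_gt0 // ler_expR.
by rewrite -ler_ndivrMr //; exact: le_bigmax.
Qed.

Lemma KL_tilt_large {delta} : delta < - ln (p kstar) ->
  exists2 b, 0 <= b & delta <= KL (tilt q p b) p.
Proof.
move=> dlt; set L := - ln (p kstar) in dlt *.
have L0 : 0 <= L by rewrite oppr_ge0 ln_le0 // prob_le1.
have K0 : 0 < K%:R :> R by rewrite ltr0n (leq_ltn_trans _ (ltn_ord kstar)).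
set eta := Num.min 1 ((L - delta) / (K%:R * (3 + L))).
have L3 : 0 < 3 + L by lra.
have eta0 : 0 < eta.
  have : 0 < (L - delta) / (K%:R * (3 + L)) by rewrite divr_gt0 ?mulr_gt0 //; lra.
  by rewrite lt_min ltr01 => ->.
have [b b0 small] := tilt_concentrates (exprn_gt0 2 eta0).
exists b => //.
have eta01 : 0 <= eta <= 1 by rewrite ltW ?ge_min ?lexx.
have := KL_ge_concentrated (tilt_prob b) pprob p0 eta01 small.
rewrite card_ord.
have : eta * (K%:R * (3 + L)) <= L - delta.
  by rewrite -ler_pdivlMr ?mulr_gt0 ?ge_min ?lexx ?orbT //; lra.
rewrite -/L; lra.
Qed.

Lemma exists_KL_tilt {delta} : 0 <= delta -> delta < - ln (p kstar) ->
  exists2 alpha, 0 <= alpha & KL (tilt q p alpha) p = delta.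
Proof.
move=> d0 dlt; have [b b0 db] := KL_tilt_large dlt.
have f_range : Num.min (KL (tilt q p 0) p) (KL (tilt q p b) p) <= delta
               <= Num.max (KL (tilt q p 0) p) (KL (tilt q p b) p).
  by rewrite KL_tilt0 ge_min le_max d0 db orbT.
have [alpha] := IVT b0 (continuous_subspaceT continuous_KL_tilt) f_range.
by rewrite in_itv /= => /andP[a0 _]; exists alpha.
Qed.

End Concentration.
End Tilt.

Theorem mainTheorem3 (R : realType) (K : nat) (zeta : R) (p q : 'I_K -> R)
  (kstar : 'I_K) (m : nat) (delta : R) :
  (2 <= K)%N -> 0 < zeta -> zeta < 1 / K%:R ->
  inS zeta p -> inS zeta q ->
  (forall k, q k <= q kstar) ->
  (1 <= m)%N ->
  0 <= delta -> delta < ln (1 / p kstar) ->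
  exists alpha : R,
    [/\ 0 <= alpha,
        KL (tilt q p alpha) p = delta,
        (forall beta : R, 0 <= beta -> KL (tilt q p beta) p = delta -> beta = alpha) &
        unique_minimizer
          (fun Phi : {ffun 'I_m -> 'I_K} -> R =>
             is_prob Phi /\ KL Phi (prodist m p) <= m%:R * delta)
          (fun Phi => crossent Phi (prodist m q))
          (prodist m (tilt q p alpha))
          (fun Phi Psi => forall y, Phi y = Psi y)].
Proof.
move=> K2 zeta0 _ [pprob [p_zeta _]] [_ [q_zeta q_inj]] q_max _ d0.
have p0 k : 0 < p k by apply: lt_trans (p_zeta k).
have q0 k : 0 < q k by apply: lt_trans (q_zeta k).
have q_lt k : k != kstar -> q k < q kstar.
  by move=> kk; rewrite lt_def q_max andbT q_inj // eq_sym.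
rewrite div1r lnV ?posrE // => dlt.
have [alpha a0 f_alpha] := exists_KL_tilt pprob p0 q0 kstar q_lt d0 dlt.
have q01 : q (Ordinal (ltn_trans (ltnSn 0) K2)) != q (Ordinal K2) by apply: q_inj.
exists alpha; split=> // [beta b0 f_beta|].
  by apply: (KL_tilt_inj pprob p0 q0 _ _ q01) => //; rewrite f_beta f_alpha.
have tilt_alpha := tilt_prob pprob p0 q0 alpha.
rewrite -f_alpha -KL_prodist //; last exact: tilt_gt0.
pose c := m%:R * ln (@tiltZ _ _ p q alpha).
apply: (tilted_unique_minimizer (a := alpha) (c := c)) => //.
- exact: prodist_gt0.
- exact: prodist_gt0.
- exact: prodist_prob.
- by apply: prodist_gt0; apply: tilt_gt0.
- by move=> y; apply: ln_prodist_tilt.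
Qed.
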